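(* Let $R$ be a commutative ring with $1$, $M$ an le-module over $R$, and suppose the image of the natural map $\psi:\mathrm{Spec}(M)\to\mathrm{Spec}(R/Ann(M))$ is a closed subset of $\mathrm{Spec}(R/Ann(M))$. Then $\mathrm{Spec}(M)$ (with the Zariski topology) is a spectral space if and only if $\psi$ is injective.
   Context: An le-module over $R$ is a complete lattice $(M,\leq)$ with greatest element $e$, with a commutative monoid operation $+$ (identity $0_M$) satisfying $m+\bigvee_{i}m_i=\bigvee_i(m+m_i)$ for all families, and a map $R\times M\to M$, $(r,m)\mapsto rm$, such that for all $r,r_1,r_2\in R$, $m,m_1,m_2,m_i\in M$: $r(m_1+m_2)=rm_1+rm_2$; $(r_1+r_2)m\leq r_1m+r_2m$; $(r_1r_2)m=r_1(r_2m)$; $1_Rm=m$; $0_Rm=r0_M=0_M$; $r(\bigvee_i m_i)=\bigvee_i rm_i$. A submodule element is $n\in M$ with $n+n\leq n$ and $rn\leq n$ for all $r\in R$; it is proper if $n\neq e$. For $n\in M$, $(n:e)=\{r\in R:re\leq n\}$; $Ann(M)=(0_M:e)$. A prime submodule element is a proper submodule element $p$ such that for all $r\in R$, $m\in M$, $rm\leq p$ implies $r\in(p:e)$ or $m\leq p$; $\mathrm{Spec}(M)$ is the set of prime submodule elements. For a submodule element $n$, $V^*(n)=\{p\in\mathrm{Spec}(M):(n:e)\subseteq(p:e)\}$; the Zariski topology on $\mathrm{Spec}(M)$ has closed sets exactly the $V^*(n)$. The natural map is $\psi(p)=(p:e)/Ann(M)$; $\mathrm{Spec}(R/Ann(M))$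 carries its usual Zariski topology. A topological space is spectral if it is $T_0$, quasi-compact, its quasi-compact open subsets are closed under finite intersection and form an open base, and every irreducible closed subset has a generic point. *)

From mathcomp Require Import all_boot all_algebra.
From Stdlib Require Import List.

Set Implicit Arguments.
Unset Strict Implicit.
Unset Printing Implicit Defensive.

Import GRing.Theory.
Local Open Scope ring_scope.

Record leModule (R : comPzRingType) := LeModule {
  lm_car :> Type;
  lm_le : lm_car -> lm_car -> Prop;
  lm_sup : (lm_car -> Prop) -> lm_car;
  lm_add : lm_car -> lm_car -> lm_car;
  lm_zero : lm_car;
  lm_act : R -> lm_car -> lm_car;
  lm_le_refl : forall x, lm_le x x;
  lm_le_trans : forall x y z, lm_le x y -> lm_le y z -> lm_le x z;
  lm_le_anti : forall x y, lm_le x y -> lm_le y x -> x = y;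
  lm_sup_ub : forall (A : lm_car -> Prop) x, A x -> lm_le x (lm_sup A);
  lm_sup_least : forall (A : lm_car -> Prop) y,
      (forall x, A x -> lm_le x y) -> lm_le (lm_sup A) y;
  lm_addA : forall x y z, lm_add x (lm_add y z) = lm_add (lm_add x y) z;
  lm_addC : forall x y, lm_add x y = lm_add y x;
  lm_add0 : forall x, lm_add lm_zero x = x;
  lm_add_sup : forall (A : lm_car -> Prop) m, (exists x, A x) ->
      lm_add m (lm_sup A) = lm_sup (fun y => exists x, A x /\ y = lm_add m x);
  lm_act_addr : forall r m1 m2, lm_act r (lm_add m1 m2) = lm_add (lm_act r m1) (lm_act r m2);
  lm_act_addl : forall r1 r2 m, lm_le (lm_act (r1 + r2) m) (lm_add (lm_act r1 m) (lm_act r2 m));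
  lm_act_mul : forall r1 r2 m, lm_act (r1 * r2) m = lm_act r1 (lm_act r2 m);
  lm_act1 : forall m, lm_act 1 m = m;
  lm_act0r : forall m, lm_act 0 m = lm_zero;
  lm_act_r0 : forall r, lm_act r lm_zero = lm_zero;
  lm_act_sup : forall r (A : lm_car -> Prop),
      lm_act r (lm_sup A) = lm_sup (fun y => exists x, A x /\ y = lm_act r x)
}.

Arguments lm_zero {R} l.

Section LeModuleDefs.
Variables (R : comPzRingType) (M : leModule R).

Definition lm_top : M := lm_sup (fun _ => True).

Definition submodule_elem (n : M) : Prop :=
  lm_le (lm_add n n) n /\ forall r : R, lm_le (lm_act r n) n.

Definition colon (n : M) : R -> Prop := fun r => lm_le (lm_act r lm_top) n.

Definition Ann : R -> Prop := colon (lm_zero M).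

Definition prime_elem (p : M) : Prop :=
  submodule_elem p /\ p <> lm_top /\
  forall (r : R) (m : M), lm_le (lm_act r m) p -> colon p r \/ lm_le m p.

Definition SpecM : Type := {p : M | prime_elem p}.

Definition Vstar (n : M) : SpecM -> Prop :=
  fun p => forall r, colon n r -> colon (proj1_sig p) r.

Definition zariski_closedM (C : SpecM -> Prop) : Prop :=
  exists n : M, submodule_elem n /\ forall p, C p <-> Vstar n p.

End LeModuleDefs.

Section RingSpec.
Variable S : comPzRingType.

Definition prime_ideal (P : S -> Prop) : Prop :=
  [/\ P 0, (forall x y, P x -> P y -> P (x + y)),
      (forall a x, P x -> P (a * x)), ~ P 1 &
      (forall x y, P (x * y) -> P x \/ P y)].

Definition SpecR : Type := {P : S -> Prop | prime_ideal P}.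

Definition zariski_closedR (C : SpecR -> Prop) : Prop :=
  exists A : S -> Prop, forall P, C P <-> (forall x, A x -> proj1_sig P x).

End RingSpec.

Section Spectral.
Variables (X : Type) (closed : (X -> Prop) -> Prop).

Definition is_open (U : X -> Prop) : Prop := closed (fun x => ~ U x).

Definition quasi_compact (K : X -> Prop) : Prop :=
  forall F : (X -> Prop) -> Prop,
    (forall U, F U -> is_open U) ->
    (forall x, K x -> exists U, F U /\ U x) ->
    exists l : list (X -> Prop),
      (forall U, In U l -> F U) /\ (forall x, K x -> exists U, In U l /\ U x).

Definition T0 : Prop :=
  forall x y : X, x <> y -> exists U, is_open U /\
    ((U x /\ ~ U y) \/ (U y /\ ~ U x)).

Definition irreducible (Z : X -> Prop) : Prop :=
  (exists x, Z x) /\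
  forall C1 C2, closed C1 -> closed C2 ->
    (forall x, Z x -> C1 x \/ C2 x) ->
    (forall x, Z x -> C1 x) \/ (forall x, Z x -> C2 x).

Definition closure1 (x : X) : X -> Prop :=
  fun y => forall C, closed C -> C x -> C y.

Definition spectral : Prop :=
  [/\ T0,
      quasi_compact (fun _ => True),
      (forall U V, is_open U -> quasi_compact U -> is_open V -> quasi_compact V ->
         quasi_compact (fun x => U x /\ V x)),
      (forall U x, is_open U -> U x ->
         exists V, [/\ is_open V, quasi_compact V, V x & forall y, V y -> U y]) &
      (forall Z, closed Z -> irreducible Z ->
         exists x, forall y, Z y <-> closure1 x y)].

End Spectral.

(* The natural map psi : Spec(M) -> Spec(R/Ann(M)), psi(p) = (p:e)/Ann(M). *)
(* R/Ann(M) is represented by any ring S with a surjective ring morphism  *)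
(* pi : R -> S whose kernel is Ann(M); psi(p) is the (prime) ideal        *)
(* pi((p:e)) of S, given here by its underlying subset of S.              *)
Definition psi_set (R S : comPzRingType) (M : leModule R) (pi : R -> S)
  (p : SpecM M) : S -> Prop :=
  fun s => exists r, colon (proj1_sig p) r /\ pi r = s.

Definition psi_image (R S : comPzRingType) (M : leModule R) (pi : R -> S) :
  SpecR S -> Prop :=
  fun P => exists p : SpecM M, forall s, proj1_sig P s <-> psi_set pi p s.

Definition psi_injective (R S : comPzRingType) (M : leModule R) (pi : R -> S) : Prop :=
  forall p q : SpecM M, (forall s, psi_set pi p s <-> psi_set pi q s) -> p = q.

(* The closed sets V*(n) of Spec(M) are exactly the preimages of the Zariski
   closed sets V(T) of Spec(R) under p |-> (p:e): V*(n) is the preimage of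
   V((n:e)), and V(T) pulls back to V*(n_T) for the least submodule element
   n_T with T in (n_T:e).  Since (p:e) contains Ann(M) and R/Ann(M) has the
   primes of R containing Ann(M) as its spectrum, closedness of the image of
   psi says that the image of p |-> (p:e) is some closed set V(B) of Spec(R).
   Points with the same (p:e) cannot be separated by such a topology, so T0
   forces injectivity.  Conversely, an injective p |-> (p:e) identifies
   Spec(M) with the subspace V(B) of Spec(R), which is spectral: the basic
   opens D(f) are quasi-compact (by Zorn, some prime avoids the powers of f),
   form a base and are closed under intersection, and an irreducible closed
   set has the intersection of its primes as generic point. *)

From Stdlib Require Import List.
From mathcomp Require Import all_boot all_algebra ring.
From mathcomp Require Import boolp classical_sets.

Set Implicit Arguments.
Unset Strict Implicit.
Unset Printing Implicit Defensive.

Import GRing.Theory.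
Local Open Scope ring_scope.
Local Open Scope classical_set_scope.

Section Ideals.
Variable R : comPzRingType.
Implicit Types (G I P T : set R) (a f x y z : R).

Definition ideal I : Prop :=
  [/\ I 0, forall x y, I x -> I y -> I (x + y) & forall a x, I x -> I (a * x)].

Lemma ideal0 I : ideal I -> I 0. Proof. by case. Qed.

Lemma idealD I x y : ideal I -> I x -> I y -> I (x + y).
Proof. by case=> _ + _; apply. Qed.

Lemma idealM I [a] x : ideal I -> I x -> I (a * x).
Proof. by case=> _ _; apply. Qed.

Lemma prime_ideal_ideal P : prime_ideal P -> ideal P.
Proof. by case. Qed.

Lemma prime_idealX P f k : prime_ideal P -> P (f ^+ k) -> P f.
Proof.
case=> _ _ _ P1 Pmul; elim: k => [|k IH]; first by rewrite expr0.
by rewrite exprS => /Pmul [].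
Qed.

Definition ideal_span G : set R := fun z => forall I, ideal I -> G `<=` I -> I z.

Lemma ideal_span_ideal G : ideal (ideal_span G).
Proof.
split=> [I /ideal0 //|x y Gx Gy I idI GI|a x Gx I idI GI].
  by apply: idealD => //; [apply: Gx | apply: Gy].
by apply: idealM => //; apply: Gx.
Qed.

Lemma sub_ideal_span G : G `<=` ideal_span G.
Proof. by move=> x Gx I _; apply. Qed.

Lemma ideal_span_sub G I : ideal I -> G `<=` I -> ideal_span G `<=` I.
Proof. by move=> idI GI z; apply. Qed.

Lemma ideal_span_mono G G' : G `<=` G' -> ideal_span G `<=` ideal_span G'.
Proof.
move=> GG'; apply: ideal_span_sub (ideal_span_ideal G') _.
exact: subset_trans GG' (@sub_ideal_span G').
Qed.

Lemma ideal_span_setU1 G x z :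
  ideal_span (G `|` [set x]) z -> exists a y, ideal_span G y /\ z = y + a * x.
Proof.
pose I := [set z | exists a y, ideal_span G y /\ z = y + a * x].
suff idI : ideal I by apply: ideal_span_sub idI _ z => t [Gt|->];
  [exists 0, t; rewrite mul0r addr0; split => //; apply: sub_ideal_span
  |exists 1, 0; rewrite mul1r add0r; split => //; apply: ideal0 (ideal_span_ideal G)].
split.
- by exists 0, 0; rewrite mul0r addr0; split; [apply: ideal0 (ideal_span_ideal G)|].
- move=> _ _ [a [y [Gy ->]]] [b [y' [Gy' ->]]]; exists (a + b), (y + y').
  by split; [apply: idealD (ideal_span_ideal G) _ _ | rewrite mulrDl addrACA].
- move=> c _ [a [y [Gy ->]]]; exists (c * a), (c * y).
  by split; [apply: idealM (ideal_span_ideal G) _ | rewrite mulrDr mulrA].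
Qed.

Lemma ideal_span_bigcup_chain T (F : set (set R)) : total_on F subset ->
  ideal_span (T `|` \bigcup_(X in F) X) `<=`
  ideal_span T `|` \bigcup_(X in F) ideal_span (T `|` X).
Proof.
move=> Ftot; pose J := ideal_span T `|` \bigcup_(X in F) ideal_span (T `|` X).
have spanTX X : ideal_span T `<=` ideal_span (T `|` X).
  by apply: ideal_span_mono; apply: subsetUl.
suff idJ : ideal J.
  apply: ideal_span_sub idJ _ => t [Tt|[X FX Xt]]; first by left; apply: sub_ideal_span.
  by right; exists X => //; apply: sub_ideal_span; right.
split=> [|x y|a x]; first by left; apply: ideal0 (ideal_span_ideal T).
- move=> [Tx|[X FX Xx]] [Ty|[Y FY Yy]].
  + by left; apply: idealD (ideal_span_ideal T) _ _.
  + by right; exists Y => //; apply: idealD (ideal_span_ideal _) _ Yy; apply: spanTX.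
  + by right; exists X => //; apply: idealD (ideal_span_ideal _) Xx _; apply: spanTX.
  + have [XY|YX] := Ftot X Y FX FY.
      right; exists Y => //; apply: idealD (ideal_span_ideal _) _ Yy.
      by apply: ideal_span_mono Xx; apply: setUS.
    right; exists X => //; apply: idealD (ideal_span_ideal _) Xx _.
    by apply: ideal_span_mono Yy; apply: setUS.
- move=> [Tx|[X FX Xx]]; first by left; apply: idealM (ideal_span_ideal T) _.
  by right; exists X => //; apply: idealM (ideal_span_ideal _) _.
Qed.

Lemma prime_avoiding_powers T f : (forall k, ~ ideal_span T (f ^+ k)) ->
  exists Q, [/\ prime_ideal Q, T `<=` Q & ~ Q f].
Proof.
move=> Tf; pose avoiding X := forall k, ~ ideal_span (T `|` X) (f ^+ k).
have avoiding_chain F : F `<=` avoiding -> total_on F subset ->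
    avoiding (\bigcup_(X in F) X).
  move=> Favoid Ftot k /(ideal_span_bigcup_chain Ftot).
  by case=> [/Tf|[X FX /(Favoid X FX k)]].
have [A [avA Amax]] := Zorn_bigcup avoiding_chain.
pose Q := ideal_span (T `|` A).
have power_in_Q_plus x : ~ Q x -> exists k a y, Q y /\ f ^+ k = y + a * x.
  move=> Qx; have : ~ avoiding (A `|` [set x]).
    apply: Amax; split; first exact: subsetUl.
    by move=> /(_ x (or_intror erefl)) Ax; apply: Qx; apply: sub_ideal_span; right.
  move=> notav; apply: contrapT => noext; apply: notav => k Ek.
  by apply: noext; exists k; apply: ideal_span_setU1; rewrite -setUA.
exists Q; split.
- have idQ : ideal Q := ideal_span_ideal _.
  case: (idQ) => Q0 QD QM; split=> //; first by have := avA 0%N; rewrite expr0.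
  move=> x y Qxy; apply: contrapT => /not_orP [/power_in_Q_plus [k [a [u [Qu Ek]]]]].
  move=> /power_in_Q_plus [m [b [v [Qv Em]]]]; apply: (avA (k + m)%N).
  rewrite exprD Ek Em.
  have -> : (u + a * x) * (v + b * y) =
            u * v + (b * y) * u + (a * x) * v + (a * b) * (x * y) by ring.
  by do 3?apply: (idealD idQ); apply: (idealM idQ).
- by apply: subset_trans (@sub_ideal_span _); apply: subsetUl.
- by have := avA 1%N; rewrite expr1.
Qed.

End Ideals.

Section QuasiCompact.
Variables (X : Type) (closed : set (set X)).

Lemma quasi_compact0 : quasi_compact closed set0.
Proof. by move=> F _ _; exists nil. Qed.

Lemma quasi_compactU K1 K2 : quasi_compact closed K1 -> quasi_compact closed K2 ->
  quasi_compact closed (K1 `|` K2).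
Proof.
move=> qc1 qc2 F Fo Fcov.
have [l1 [l1F l1cov]] := qc1 F Fo (fun x (K1x : K1 x) => Fcov x (or_introl K1x)).
have [l2 [l2F l2cov]] := qc2 F Fo (fun x (K2x : K2 x) => Fcov x (or_intror K2x)).
exists (l1 ++ l2); split=> [U|x [/l1cov|/l2cov] [U [lU Ux]]].
- by rewrite in_app_iff => -[/l1F|/l2F].
- by exists U; rewrite in_app_iff; split => //; left.
- by exists U; rewrite in_app_iff; split => //; right.
Qed.

End QuasiCompact.

Section PullbackZariski.
Variables (R : comPzRingType) (X : Type) (ideal_of : X -> set R).
Hypothesis ideal_of_prime : forall x, prime_ideal (ideal_of x).

Definition zero_locus (T : set R) : set X := [set x | T `<=` ideal_of x].

Definition pullback_closed (C : set X) : Prop := exists T, C = zero_locus T.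

Local Notation closed := pullback_closed.

Definition basic_open (f : R) : set X := [set x | ~ ideal_of x f].

Lemma zero_locus_closed T : closed (zero_locus T).
Proof. by exists T. Qed.

Lemma basic_open_open f : is_open closed (basic_open f).
Proof.
exists [set f]; apply/seteqP; split=> x /=; first by move=> /contrapT xf _ ->.
by move=> xf; apply; apply: xf.
Qed.

Lemma open_bigcup_basic U : is_open closed U ->
  exists T, U = \bigcup_(t in T) basic_open t.
Proof.
move=> [T]; rewrite predeqE => UT; exists T; apply/seteqP; split=> x.
  move=> Ux; apply: contrapT => nx; apply: (proj2 (UT x)) Ux => t Tt.
  by apply: contrapT => xt; apply: nx; exists t.
by move=> [t Tt xt]; apply: contrapT => nUx; apply: xt; apply: (proj1 (UT x)).
Qed.

Lemma basic_open1 : basic_open 1 = setT.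
Proof. by apply/seteqP; split=> x // _; have [_ _ _ ] := ideal_of_prime x. Qed.

Lemma basic_openM r s : basic_open (r * s) = basic_open r `&` basic_open s.
Proof.
apply/seteqP; split=> x; have [_ _ xM _ xP] := ideal_of_prime x.
  by move=> xrs; split=> xr; apply: xrs; [rewrite mulrC|]; apply: xM.
by move=> [xr xs] /xP [].
Qed.

Lemma pullback_T0_injective : T0 closed -> injective ideal_of.
Proof.
move=> T0X x y exy; apply: contrapT => /T0X [U [Uo xyU]].
have [T UT] := open_bigcup_basic Uo.
suff : U x <-> U y by tauto.
by rewrite UT /bigcup /basic_open /= exy.
Qed.

Definition vanishing_off_finite_subcover (F : set (set X)) : set R :=
  [set r | exists l, (forall U, In U l -> F U) /\
     forall x, (forall U, In U l -> ~ U x) -> ideal_of x r].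

Lemma vanishing_off_finite_subcover_ideal F : ideal (vanishing_off_finite_subcover F).
Proof.
split.
- by exists nil; split=> // x _; apply: ideal0 (prime_ideal_ideal _).
- move=> r s [l1 [l1F l1r]] [l2 [l2F l2s]]; exists (l1 ++ l2); split.
    by move=> U; rewrite in_app_iff => -[/l1F|/l2F].
  move=> x lx; apply: idealD (prime_ideal_ideal _) _ _ => //.
    by apply: l1r => U l1U; apply: lx; rewrite in_app_iff; left.
  by apply: l2s => U l2U; apply: lx; rewrite in_app_iff; right.
- move=> a r [l [lF lr]]; exists l; split => // x lx.
  exact: idealM (prime_ideal_ideal _) (lr x lx).
Qed.

Variable B : set R.
Hypothesis B_sub_ideal_of : forall x, B `<=` ideal_of x.
Hypothesis ideal_of_onto :
  forall Q, prime_ideal Q -> B `<=` Q -> exists x, ideal_of x = Q.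

(* Either a power of f is a combination of elements each vanishing off some
   member of F, and then finitely many members cover D(f); or some prime
   avoiding f contains all these elements, and the point of D(f) it defines
   lies in no member of F. *)
Lemma basic_open_quasi_compact f : quasi_compact closed (basic_open f).
Proof.
move=> F Fo Fcov.
pose vanishing := B `|` [set r | exists2 U, F U & ~` U `<=` [set x | ideal_of x r]].
have [[k fk]|nofk] := EM (exists k, ideal_span vanishing (f ^+ k)).
  have vancov : vanishing `<=` vanishing_off_finite_subcover F.
    move=> r [Br|[U FU Ur]]; first by exists nil; split=> // x _; apply: B_sub_ideal_of.
    by exists [:: U]; split=> [V [<-|]|x Ux] //; apply: Ur; apply: Ux; left.
  have [l [lF lcov]] :=
    ideal_span_sub (vanishing_off_finite_subcover_ideal F) vancov fk.
  exists l; split=> // x fx; apply: contrapT => nx; apply: fx.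
  apply: prime_idealX (ideal_of_prime x) (lcov x _) => U lU Ux.
  by apply: nx; exists U.
have [Q [Qprime vanQ Qf]] : exists Q, [/\ prime_ideal Q, vanishing `<=` Q & ~ Q f].
  by apply: prime_avoiding_powers => k fk; apply: nofk; exists k.
have [x xQ] := ideal_of_onto Qprime (subset_trans (@subsetUl _ _ _) vanQ).
have [U [FU Ux]] : exists U, F U /\ U x by apply: Fcov; rewrite /basic_open /= xQ.
have [T UT] := open_bigcup_basic (Fo U FU).
have [t Tt xt] : (\bigcup_(t in T) basic_open t) x by rewrite -UT.
exfalso; apply: xt; rewrite xQ; apply: vanQ; right; exists U => // y nUy.
by apply: contrapT => yt; apply: nUy; rewrite UT; exists t.
Qed.

Definition basic_union (rs : seq R) : set X := \bigcup_(r in [set` rs]) basic_open r.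

Lemma basic_union_quasi_compact rs : quasi_compact closed (basic_union rs).
Proof.
rewrite /basic_union bigcup_seq; elim: rs => [|r rs IH].
  by rewrite big_nil; apply: quasi_compact0.
by rewrite big_cons; apply: quasi_compactU => //; apply: basic_open_quasi_compact.
Qed.

Lemma basic_unionI rs ss :
  basic_union rs `&` basic_union ss = basic_union [seq r * s | r <- rs, s <- ss].
Proof.
apply/seteqP; split=> x.
  move=> [[r rsr xr] [s sss xs]]; exists (r * s); first by apply/allpairsP; exists (r, s).
  by rewrite basic_openM.
move=> [_ /allpairsP [[r s] [/= rsr sss ->]]]; rewrite basic_openM => -[xr xs].
by split; [exists r | exists s].
Qed.

Lemma open_quasi_compact_basic_union U :
  is_open closed U -> quasi_compact closed U -> exists rs, U = basic_union rs.
Proof.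
move=> Uo Uqc; have [T UT] := open_bigcup_basic Uo.
pose F := [set basic_open t | t in T].
have Fo V : F V -> is_open closed V by move=> [t _ <-]; apply: basic_open_open.
have Fcov x : U x -> exists V, F V /\ V x.
  by rewrite UT => -[t Tt xt]; exists (basic_open t); split => //; exists t.
have [l [lF lcov]] := Uqc F Fo Fcov.
have [rs [rsT lrs]] : exists rs : seq R, [set` rs] `<=` T /\
    forall V, In V l -> exists2 r, r \in rs & V = basic_open r.
  elim: l lF {lcov} => [|V l IH] lF; first by exists [::].
  have [rs [rsT lrs]] := IH (fun W lW => lF W (or_intror lW)).
  have [t Tt <-] := lF V (or_introl erefl).
  exists (t :: rs); split=> [r|W [<-|/lrs [r rsr ->]]].
  - by rewrite /= inE => /predU1P [->|/rsT].
  - by exists t; rewrite ?mem_head.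
  - by exists r; rewrite // inE rsr orbT.
exists rs; apply/seteqP; split=> x.
  by move=> /lcov [V [/lrs [r rsr ->] xr]]; exists r.
by move=> [r /rsT Tr xr]; rewrite UT; exists r.
Qed.

Lemma irreducible_generic_point Z : closed Z -> irreducible closed Z ->
  exists x, forall y, Z y <-> closure1 closed x y.
Proof.
move=> [T ->] [[x0 Zx0] Zirr].
pose Q := \bigcap_(x in zero_locus T) ideal_of x.
have Qprime : prime_ideal Q.
  split.
  - by move=> x _; apply: ideal0 (prime_ideal_ideal _).
  - by move=> r s Qr Qs x Zx; apply: idealD (prime_ideal_ideal _) (Qr x Zx) (Qs x Zx).
  - by move=> a r Qr x Zx; apply: idealM (prime_ideal_ideal _) (Qr x Zx).
  - by move=> /(_ x0 Zx0); have [_ _ _] := ideal_of_prime x0.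
  - move=> r s Qrs.
    have [] := Zirr (zero_locus [set r]) (zero_locus [set s])
      (zero_locus_closed _) (zero_locus_closed _).
    + move=> x Zx; have [_ _ _ _ /(_ r s (Qrs x Zx)) [xr|xs]] := ideal_of_prime x.
        by left=> _ ->.
      by right=> _ ->.
    + by move=> Zr; left=> x /Zr; apply.
    + by move=> Zs; right=> x /Zs; apply.
have [x xQ] := ideal_of_onto Qprime (fun r Br y _ => B_sub_ideal_of y Br).
have Zx : zero_locus T x by move=> t Tt; rewrite xQ => y Zy; apply: Zy.
exists x => y; split; last by apply; [apply: zero_locus_closed|].
move=> Zy _ [T' ->] T'x t T't.
by have := T'x t T't; rewrite xQ; apply.
Qed.

Lemma pullback_spectral : injective ideal_of -> spectral closed.
Proof.
move=> inj; split.
- move=> x y xy; have [r xyr] : exists r, ~ (ideal_of x r <-> ideal_of y r).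
    apply/not_existsP => same; apply: xy; apply: inj.
    by apply/funext => r; apply/propext; apply: contrapT (same r).
  exists (basic_open r); split; first exact: basic_open_open.
  by have [xr|xr] := EM (ideal_of x r); [right|left]; rewrite /basic_open /=; tauto.
- by have := basic_open_quasi_compact (f := 1); rewrite basic_open1.
- move=> U V Uo Uqc Vo Vqc.
  have [rs ->] := open_quasi_compact_basic_union Uo Uqc.
  have [ss ->] := open_quasi_compact_basic_union Vo Vqc.
  have -> : (fun x => basic_union rs x /\ basic_union ss x) = basic_union rs `&` basic_union ss by [].
  by rewrite basic_unionI; apply: basic_union_quasi_compact.
- move=> U x Uo Ux; have [T UT] := open_bigcup_basic Uo.
  have [t Tt xt] : (\bigcup_(t in T) basic_open t) x by rewrite -UT.
  exists (basic_open t); split=> //.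
  + exact: basic_open_open.
  + exact: basic_open_quasi_compact.
  + by move=> y yt; rewrite UT; exists t.
- exact: irreducible_generic_point.
Qed.

End PullbackZariski.

Section LeModule.
Variables (R : comPzRingType) (M : leModule R).
Implicit Types (m n x y : M) (T : set R).
Local Notation le := (@lm_le R M).

Lemma lm_sup_pair x y : le x y -> lm_sup [set z | z = x \/ z = y] = y.
Proof.
move=> xy; apply: lm_le_anti; last by apply: lm_sup_ub; right.
by apply: lm_sup_least => z [->|->] //; apply: lm_le_refl.
Qed.

Lemma lm_leD2l m x y : le x y -> le (lm_add m x) (lm_add m y).
Proof.
move=> xy; rewrite -(lm_sup_pair xy) lm_add_sup; last by exists x; left.
by apply: lm_sup_ub; exists x; split => //; left.
Qed.

Lemma lm_leD x x' y y' : le x x' -> le y y' -> le (lm_add x y) (lm_add x' y').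
Proof.
move=> xx' yy'; apply: lm_le_trans (lm_leD2l x yy') _.
by rewrite (lm_addC x) (lm_addC x'); apply: lm_leD2l.
Qed.

Lemma lm_le_act r x y : le x y -> le (lm_act r x) (lm_act r y).
Proof.
move=> xy; rewrite -(lm_sup_pair xy) lm_act_sup.
by apply: lm_sup_ub; exists x; split => //; left.
Qed.

Lemma lm_le_top x : le x (lm_top M).
Proof. exact: lm_sup_ub. Qed.

Lemma submodule_zero_le n : submodule_elem n -> le (lm_zero M) n.
Proof. by move=> [_ nact]; rewrite -(lm_act0r n); apply: nact. Qed.

Lemma colon_ideal n : submodule_elem n -> ideal (colon n).
Proof.
move=> sn; have [nadd nact] := sn; split=> [|r s nr ns|a r nr].
- by rewrite /colon lm_act0r; apply: submodule_zero_le.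
- exact: lm_le_trans (lm_act_addl _ _ _) (lm_le_trans (lm_leD nr ns) nadd).
- by rewrite /colon lm_act_mul; apply: lm_le_trans (lm_le_act a nr) (nact a).
Qed.

Lemma Ann_sub_colon n : submodule_elem n -> Ann M `<=` colon n.
Proof.
by move=> sn r; rewrite /Ann /colon => /lm_le_trans; apply; apply: submodule_zero_le.
Qed.

Lemma prime_elem_colon (p : M) : prime_elem p -> prime_ideal (colon p).
Proof.
move=> [sp [ptop pprime]]; have [c0 cD cM] := colon_ideal sp; split=> //.
  rewrite /colon lm_act1 => topp; apply: ptop.
  by apply: lm_le_anti => //; apply: lm_le_top.
by move=> r s; rewrite /colon lm_act_mul => /pprime.
Qed.

Definition submodule_gen T : M :=
  lm_sup [set x | forall n, submodule_elem n -> T `<=` colon n -> le x n].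

Lemma submodule_gen_least T n :
  submodule_elem n -> T `<=` colon n -> le (submodule_gen T) n.
Proof. by move=> sn Tn; apply: lm_sup_least => x; apply. Qed.

Lemma sub_colon_submodule_gen T : T `<=` colon (submodule_gen T).
Proof. by move=> t Tt; apply: lm_sup_ub => n sn; apply. Qed.

Lemma submodule_gen_elem T : submodule_elem (submodule_gen T).
Proof.
split=> [|r]; apply: lm_sup_ub => n sn Tn; have genn := submodule_gen_least sn Tn.
  exact: lm_le_trans (lm_leD genn genn) (proj1 sn).
exact: lm_le_trans (lm_le_act r genn) (proj2 sn r).
Qed.

Definition colon_of (p : SpecM M) : set R := colon (sval p).

Lemma colon_of_prime p : prime_ideal (colon_of p).
Proof. exact: prime_elem_colon (svalP p). Qed.

Lemma zariski_closedM_pullback : zariski_closedM (M := M) = pullback_closed colon_of.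
Proof.
apply/funext => C; apply/propext; split=> [[n [_ Cn]]|[T ->]].
  by exists (colon n); apply/seteqP; split=> p /Cn.
exists (submodule_gen T); split=> [|p]; first exact: submodule_gen_elem.
split=> [Tp r genr|genp t Tt]; last exact/genp/sub_colon_submodule_gen.
exact: lm_le_trans genr (submodule_gen_least (proj1 (svalP p)) Tp).
Qed.

End LeModule.

Section RingQuotient.
Variables (R S : comPzRingType) (pi : {rmorphism R -> S}) (K : set R).
Hypothesis pi_surj : forall s, exists r, pi r = s.
Hypothesis pi_ker : forall r, pi r = 0 <-> K r.

Definition ideal_image (Q : set R) : set S := fun s => exists r, Q r /\ pi r = s.

Lemma ideal_image_pi Q r : ideal Q -> K `<=` Q -> ideal_image Q (pi r) <-> Q r.
Proof.
move=> idQ KQ; split=> [[r' [Qr' e]]|Qr]; last by exists r.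
have Qd : Q (r - r') by apply: KQ; apply/pi_ker; rewrite rmorphB e subrr.
by rewrite -(subrK r' r); apply: idealD idQ Qd Qr'.
Qed.

Lemma ideal_image_prime Q : prime_ideal Q -> K `<=` Q -> prime_ideal (ideal_image Q).
Proof.
move=> Qprime KQ; have idQ := prime_ideal_ideal Qprime.
have [_ _ _ Q1 Qmul] := Qprime.
split.
- by exists 0; rewrite rmorph0; split => //; apply: ideal0 idQ.
- move=> _ _ [a [Qa <-]] [b [Qb <-]]; exists (a + b); rewrite rmorphD; split => //.
  exact: idealD idQ Qa Qb.
- move=> s _ [b [Qb <-]]; have [a <-] := pi_surj s.
  by exists (a * b); rewrite rmorphM; split => //; apply: idealM idQ Qb.
- by rewrite -(rmorph1 pi) ideal_image_pi.
- move=> s t; have [a <-] := pi_surj s; have [b <-] := pi_surj t.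
  by rewrite -rmorphM !ideal_image_pi //; apply: Qmul.
Qed.

End RingQuotient.

Section PsiMap.
Variables (R S : comPzRingType) (M : leModule R) (pi : {rmorphism R -> S}).
Hypothesis pi_surj : forall s, exists r, pi r = s.
Hypothesis pi_ker : forall r, pi r = 0 <-> Ann M r.

Lemma Ann_sub_colon_of (p : SpecM M) : Ann M `<=` colon_of p.
Proof. exact: Ann_sub_colon (proj1 (svalP p)). Qed.

Lemma psi_set_pi (p : SpecM M) r : psi_set pi p (pi r) <-> colon_of p r.
Proof.
exact: (ideal_image_pi pi_ker r (prime_ideal_ideal (colon_of_prime p))
  (@Ann_sub_colon_of p)).
Qed.

Lemma psi_injectiveE : psi_injective M pi = injective (@colon_of R M).
Proof.
apply/propext; split=> [psi_inj p q pq|colon_inj p q pq].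
  apply: psi_inj => s; rewrite /psi_set.
  by have -> : colon (sval p) = colon (sval q) := pq.
by apply: colon_inj; apply/funext => r; apply/propext; rewrite -!psi_set_pi.
Qed.

Lemma psi_image_zero_locus : zariski_closedR (psi_image M pi) ->
  exists B : set R, (forall p : SpecM M, B `<=` colon_of p) /\
    forall Q, prime_ideal Q -> B `<=` Q -> exists p : SpecM M, colon_of p = Q.
Proof.
move=> [A imA]; exists (Ann M `|` [set r | A (pi r)]); split.
- move=> p r [Annr|Apir]; first exact: Ann_sub_colon_of.
  pose P : SpecR S := exist _ (psi_set pi p)
    (ideal_image_prime pi_surj pi_ker (colon_of_prime p) (@Ann_sub_colon_of p)).
  have : psi_image M pi P by exists p; split.
  by move=> /imA /(_ _ Apir) /psi_set_pi.
- move=> Q Qprime BQ; have AnnQ : Ann M `<=` Q by move=> r Annr; apply: BQ; left.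
  pose P : SpecR S :=
    exist _ (ideal_image pi Q) (ideal_image_prime pi_surj pi_ker Qprime AnnQ).
  have [p pP] : psi_image M pi P.
    apply/imA => s; have [r <-] := pi_surj s => Apir.
    by exists r; split => //; apply: BQ; right.
  exists p; apply/funext => r; apply/propext.
  by rewrite -psi_set_pi -(pP (pi r)) /= ideal_image_pi //; apply: prime_ideal_ideal.
Qed.

End PsiMap.

Theorem theorem7p3 (R S : comPzRingType) (M : leModule R)
  (pi : {rmorphism R -> S})
  (pi_surj : forall s : S, exists r : R, pi r = s)
  (pi_ker : forall r : R, pi r = 0%R <-> Ann M r)
  (img_closed : zariski_closedR (psi_image M pi)) :
  spectral (zariski_closedM (M := M)) <-> psi_injective M pi.
Proof.
have [B [B_sub B_onto]] := psi_image_zero_locus pi_surj pi_ker img_closed.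
rewrite zariski_closedM_pullback (psi_injectiveE pi_ker).
split=> [[T0M _ _ _ _]|]; first exact: pullback_T0_injective T0M.
exact: (pullback_spectral (@colon_of_prime R M) B_sub B_onto).
Qed.
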